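(* Let $g(x)=\sum_{k=0}^\infty a_k x^k$ be a real power series convergent for $x\in(-\varrho,\varrho)$, some $\varrho\in(0,\infty)$, put $G(y)=g(1/y)$, and let $c\in\mathbb{R}$. Then for every real $y$ with $y+c>1+\max\{1,1/\varrho\}$, $$(y+1)G(y+c)-yG(y+c-1)=a_0+\sum_{k=2}^\infty\frac{c\sum_{i=1}^{k-1}\binom{k-1}{i-1}a_i-\Bigl(\sum_{i=1}^{k-1}\binom{k}{i-1}a_i+\bigl(\binom{k}{k-1}-1\bigr)a_k\Bigr)}{(y+c)^k},$$ the series being convergent. Consequently $\lim_{y\to\infty}\bigl((y+1)G(y+c)-yG(y+c-1)\bigr)=a_0$. In particular, for every $c\in\mathbb{R}$, $$\lim_{n\to\infty}\Bigl((n+1)\Bigl(1+\frac1{n+c}\Bigr)^{n+c}-n\Bigl(1+\frac1{n+c-1}\Bigr)^{n+c-1}\Bigr)=\mathrm{e}.$$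
   Context: $\mathrm{e}$ is the base of the natural logarithm; the special case corresponds to $g(x)=(1+x)^{1/x}$ (with value $\mathrm{e}$ at $0$), whose Maclaurin series converges on $(-1,1)$ and has constant term $\mathrm{e}$, so that $G(y)=(1+1/y)^y$. *)

From Stdlib Require Import Reals ClassicalEpsilon.
Open Scope R_scope.

(* Sum of the power series sum_k a_k x^k (a chosen limit when it converges;
   an arbitrary value otherwise). *)
Definition psum (a : nat -> R) (x : R) : R :=
  epsilon (inhabits 0) (fun l => Pser a x l).

Definition gfun (a : nat -> R) (x : R) : R := psum a x.
Definition Gfun (a : nat -> R) (y : R) : R := gfun a (/ y).

(* Numerator of the k-th term, k = m + 2:
   c * sum_{i=1}^{k-1} C(k-1,i-1) a_i
   - ( sum_{i=1}^{k-1} C(k,i-1) a_i + (C(k,k-1) - 1) a_k ),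
   with i = j + 1, j = 0..m. *)
Definition coefD (a : nat -> R) (c : R) (m : nat) : R :=
  c * sum_f_R0 (fun j => C (S m) j * a (S j)) m
  - (sum_f_R0 (fun j => C (S (S m)) j * a (S j)) m
     + (C (S (S m)) (S m) - 1) * a (S (S m))).

Definition Ffun (a : nat -> R) (c y : R) : R :=
  (y + 1) * Gfun a (y + c) - y * Gfun a (y + c - 1).

(* With z = y + c and u = 1/z one has 1/(z-1) = u/(1-u), so
   F(y) = (z - c + 1) g(u) - (z - c) g(u/(1-u)).  Euler's transform
   g(u/(1-u)) = a_0 + sum_n (sum_k C(n,k) a_(k+1)) u^(n+1), obtained by expanding each
   (u/(1-u))^(k+1) as a negative binomial series and exchanging the order of summation
   (justified by Tannery's theorem), turns F(y) into a power series in u whose coefficients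
   are the stated numerators.  These grow at most geometrically, so the series is O(u^2)
   and F(y) -> a_0.
   For the last limit, with phi(x) = x ln(1 + 1/x) one has e (1 - 1/(x+1)) <= e^phi(x) <= e,
   and e^phi(x) - e^phi(x-1) = O(1/x^2) by the mean value theorem, so
   (n+1) e^phi(n+c) - n e^phi(n+c-1) = e + O(1/n). *)

From Stdlib Require Import Reals Lra Lia ClassicalEpsilon.
From Coquelicot Require Import Coquelicot.
Open Scope R_scope.

(* Coquelicot's [C] is the type of complex numbers. *)
Local Notation C := Binomial.C (only parsing).

Lemma C_ge0 n k : 0 <= C n k.
Proof.
  unfold C. apply Rmult_le_pos; [apply pos_INR |].
  left; apply Rinv_0_lt_compat, Rmult_lt_0_compat; apply lt_0_INR, Factorial.lt_O_fact.
Qed.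

Definition negbin_psum (k : nat) (u : R) (M : nat) : R :=
  sum_f_R0 (fun j => C (k + j) k * u ^ j) M.

Lemma negbin_psum_ge0 k u M : 0 <= u -> 0 <= negbin_psum k u M.
Proof.
  intros Hu. apply cond_pos_sum. intros j.
  apply Rmult_le_pos; [apply C_ge0 | apply pow_le, Hu].
Qed.

Lemma negbin_psum_S_r k u M :
  negbin_psum k u (S M) = negbin_psum k u M + C (k + S M) k * u ^ S M.
Proof. reflexivity. Qed.

Lemma negbin_psum_0 u M : (1 - u) * negbin_psum 0 u M = 1 - u ^ S M.
Proof.
  induction M as [|M IH].
  - unfold negbin_psum; simpl. rewrite C_n_n. ring.
  - rewrite negbin_psum_S_r, Rmult_plus_distr_l, IH, C_n_0. simpl. ring.
Qed.

Lemma negbin_psum_S k u M :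
  (1 - u) * negbin_psum (S k) u M = negbin_psum k u M - C (S k + M) (S k) * u ^ S M.
Proof.
  induction M as [|M IH].
  - unfold negbin_psum; simpl. rewrite !Nat.add_0_r, !C_n_n. ring.
  - rewrite !negbin_psum_S_r, Rmult_plus_distr_l, IH.
    assert (P := pascal (k + S M) k ltac:(lia)).
    replace (S (k + S M)) with (S k + S M)%nat in P by lia.
    replace (k + S M)%nat with (S k + M)%nat in P at 2 by lia.
    rewrite <- P. simpl pow. ring.
Qed.

Lemma negbin_psum_le k u M : 0 <= u < 1 -> negbin_psum k u M <= / (1 - u) ^ S k.
Proof.
  intros Hu. assert (Hi : 0 < / (1 - u)) by (apply Rinv_0_lt_compat; lra).
  revert M; induction k as [|k IH]; intros M.
  - assert (0 <= u ^ S M) by (apply pow_le; lra).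
    apply Rmult_le_reg_l with (1 - u); [lra |].
    rewrite negbin_psum_0, pow_1, Rinv_r; lra.
  - assert (0 <= C (S k + M) (S k) * u ^ S M) by (apply Rmult_le_pos; [apply C_ge0 | apply pow_le; lra]).
    apply Rmult_le_reg_l with (1 - u); [lra |].
    rewrite negbin_psum_S.
    replace ((1 - u) * / (1 - u) ^ S (S k)) with (/ (1 - u) ^ S k)
      by (simpl; field; split; [apply pow_nonzero |]; lra).
    specialize (IH M). lra.
Qed.

Lemma negbin_psum_cv k u : 0 <= u < 1 -> is_lim_seq (negbin_psum k u) (/ (1 - u) ^ S k).
Proof.
  intros Hu. induction k as [|k IH].
  - apply (is_lim_seq_ext (fun M => (1 - u * u ^ M) / (1 - u))).
    { intros M. apply Rmult_eq_reg_l with (1 - u); [| lra].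
      rewrite negbin_psum_0. simpl. field. lra. }
    replace (/ (1 - u) ^ 1) with ((1 - u * 0) / (1 - u)) by (simpl; field; lra).
    apply is_lim_seq_div'; [| apply is_lim_seq_const | lra].
    apply is_lim_seq_minus'; [apply is_lim_seq_const |].
    apply is_lim_seq_mult'; [apply is_lim_seq_const | apply is_lim_seq_geom].
    rewrite Rabs_pos_eq; lra.
  - set (T := negbin_psum (S k) u).
    set (t := fun M => C (S k + M) (S k) * u ^ S M).
    (* [T] is increasing and bounded, so its increments [t (S M) = u (T (S M) - T M)] vanish. *)
    assert (HT : ex_finite_lim_seq T).
    { apply (ex_finite_lim_seq_incr _ (/ (1 - u) ^ S (S k))).
      - intros M. unfold T. rewrite negbin_psum_S_r.
        assert (0 <= C (S k + S M) (S k) * u ^ S M) by (apply Rmult_le_pos; [apply C_ge0 | apply pow_le; lra]).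
        lra.
      - intros M. apply negbin_psum_le, Hu. }
    destruct HT as [L HL].
    assert (Ht : is_lim_seq t 0).
    { apply is_lim_seq_incr_1.
      apply (is_lim_seq_ext (fun M => u * (T (S M) - T M))).
      { intros M. unfold T, t. rewrite negbin_psum_S_r.
        replace (S k + S M)%nat with (S (S k + M)) by lia. simpl. ring. }
      replace 0 with (u * (L - L)) by ring.
      apply is_lim_seq_mult'; [apply is_lim_seq_const |].
      apply is_lim_seq_minus'; [apply (is_lim_seq_incr_1 T L) |]; exact HL. }
    apply (is_lim_seq_ext (fun M => (negbin_psum k u M - t M) / (1 - u))).
    { intros M. apply Rmult_eq_reg_l with (1 - u); [| lra].
      unfold t, T. rewrite negbin_psum_S. field. lra. }
    replace (/ (1 - u) ^ S (S k)) with ((/ (1 - u) ^ S k - 0) / (1 - u))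
      by (simpl; field; split; [apply pow_nonzero |]; lra).
    apply is_lim_seq_div'; [apply is_lim_seq_minus'; assumption | apply is_lim_seq_const | lra].
Qed.

Lemma negbin_tail_bounds k u N : 0 <= u < 1 ->
  0 <= (u / (1 - u)) ^ S k - u ^ S k * negbin_psum k u N <= (u / (1 - u)) ^ S k.
Proof.
  intros Hu. unfold Rdiv. rewrite Rpow_mult_distr, pow_inv.
  assert (Hle := negbin_psum_le k u N Hu). assert (H0 := negbin_psum_ge0 k u N ltac:(lra)).
  assert (Hpu : 0 <= u ^ S k) by (apply pow_le; lra).
  assert (u ^ S k * negbin_psum k u N <= u ^ S k * / (1 - u) ^ S k) by (apply Rmult_le_compat_l; auto).
  assert (0 <= u ^ S k * negbin_psum k u N) by (apply Rmult_le_pos; auto).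
  lra.
Qed.

Lemma negbin_tail_cv k u : 0 <= u < 1 ->
  is_lim_seq (fun N => (u / (1 - u)) ^ S k - u ^ S k * negbin_psum k u (N - k)) 0.
Proof.
  intros Hu.
  replace 0 with ((u / (1 - u)) ^ S k - u ^ S k * / (1 - u) ^ S k)
    by (unfold Rdiv; rewrite Rpow_mult_distr, pow_inv; ring).
  apply is_lim_seq_minus'; [apply is_lim_seq_const |].
  apply is_lim_seq_mult'; [apply is_lim_seq_const |].
  apply (is_lim_seq_incr_n _ k).
  apply (is_lim_seq_ext (negbin_psum k u)); [intros N; f_equal; lia |].
  apply negbin_psum_cv, Hu.
Qed.

Lemma is_lim_seq_sum_f_R0_0 (f : nat -> nat -> R) K :
  (forall k, is_lim_seq (f k) 0) -> is_lim_seq (fun N => sum_f_R0 (fun k => f k N) K) 0.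
Proof.
  intros H. induction K as [|K IH]; [apply H |].
  replace 0 with (0 + 0) by ring. apply is_lim_seq_plus'; [exact IH | apply H].
Qed.

Lemma is_lim_seq_shift (s : nat -> R) l k : is_lim_seq s l -> is_lim_seq (fun N => s (k + N)%nat) l.
Proof.
  intros H. apply (is_lim_seq_ext (fun N => s (N + k)%nat)); [intros; f_equal; lia |].
  apply is_lim_seq_incr_n, H.
Qed.

Lemma sum_f_R0_tail_le_geom (g : nat -> R) Mb q K d : 0 <= q < 1 ->
  (forall k, Rabs (g k) <= Mb * q ^ k) ->
  Rabs (sum_f_R0 g (K + d) - sum_f_R0 g K) <= Mb * q ^ S K / (1 - q).
Proof.
  intros Hq Hg.
  assert (HM : 0 <= Mb) by (specialize (Hg 0%nat); simpl in Hg; pose proof (Rabs_pos (g 0%nat)); lra).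
  enough (Rabs (sum_f_R0 g (K + d) - sum_f_R0 g K) <= Mb * q ^ S K * (1 - q ^ d) / (1 - q)).
  { eapply Rle_trans; [eassumption |]. unfold Rdiv. apply Rmult_le_compat_r.
    - left; apply Rinv_0_lt_compat; lra.
    - assert (0 <= q ^ d) by (apply pow_le; lra).
      assert (0 <= Mb * q ^ S K) by (apply Rmult_le_pos; [| apply pow_le]; lra). nra. }
  induction d as [|d IH].
  - rewrite Nat.add_0_r, Rminus_eq_0, Rabs_R0. simpl. right; field. lra.
  - rewrite Nat.add_succ_r, tech5.
    replace (sum_f_R0 g (K + d) + g (S (K + d)) - sum_f_R0 g K)
      with ((sum_f_R0 g (K + d) - sum_f_R0 g K) + g (S (K + d))) by ring.
    eapply Rle_trans; [apply Rabs_triang |].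
    specialize (Hg (S (K + d))).
    replace (Mb * q ^ S K * (1 - q ^ S d) / (1 - q))
      with (Mb * q ^ S K * (1 - q ^ d) / (1 - q) + Mb * q ^ S (K + d)).
    + lra.
    + replace (S (K + d)) with (S K + d)%nat by lia. rewrite pow_add. simpl. field. lra.
Qed.

Lemma tannery (f : nat -> nat -> R) Mb q : 0 <= q < 1 ->
  (forall k N, Rabs (f k N) <= Mb * q ^ k) ->
  (forall k, is_lim_seq (f k) 0) ->
  is_lim_seq (fun N => sum_f_R0 (fun k => f k N) N) 0.
Proof.
  intros Hq Hb Hc. apply is_lim_seq_Reals. intros eps He.
  assert (HM : 0 <= Mb) by (specialize (Hb 0%nat 0%nat); simpl in Hb; pose proof (Rabs_pos (f 0%nat 0%nat)); lra).
  assert (Hy : eps * (1 - q) / (2 * (Mb + 1)) > 0) by (apply Rdiv_lt_0_compat; [apply Rmult_lt_0_compat |]; lra).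
  destruct (pow_lt_1_zero q ltac:(rewrite Rabs_pos_eq; lra) _ Hy) as [K HK].
  assert (HqK := HK (S K) ltac:(lia)). rewrite Rabs_pos_eq in HqK by (apply pow_le; lra).
  assert (Htail : Mb * q ^ S K / (1 - q) <= eps / 2).
  { apply Rmult_le_reg_r with (1 - q); [lra |].
    unfold Rdiv. rewrite Rmult_assoc, Rinv_l, Rmult_1_r by lra.
    apply Rle_trans with (Mb * (eps * (1 - q) / (2 * (Mb + 1)))); [apply Rmult_le_compat_l; lra |].
    apply Rmult_le_reg_r with (2 * (Mb + 1)); [lra |].
    replace (Mb * (eps * (1 - q) / (2 * (Mb + 1))) * (2 * (Mb + 1))) with (Mb * (eps * (1 - q))) by (field; lra).
    assert (0 < eps * (1 - q)) by (apply Rmult_lt_0_compat; lra). nra. }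
  destruct (proj1 (is_lim_seq_Reals _ _) (is_lim_seq_sum_f_R0_0 f K Hc) (eps / 2) ltac:(lra)) as [N1 HN1].
  exists (N1 + K)%nat. intros n Hn.
  specialize (HN1 n ltac:(lia)). unfold Rdist in *. rewrite Rminus_0_r in *.
  assert (Ht := sum_f_R0_tail_le_geom (fun k => f k n) Mb q K (n - K) Hq (fun k => Hb k n)).
  replace (K + (n - K))%nat with n in Ht by lia.
  replace (sum_f_R0 (fun k => f k n) n) with
    ((sum_f_R0 (fun k => f k n) n - sum_f_R0 (fun k => f k n) K) + sum_f_R0 (fun k => f k n) K) by ring.
  eapply Rle_lt_trans; [apply Rabs_triang | lra].
Qed.

Lemma sum_f_R0_antidiag (f : nat -> nat -> R) N :
  sum_f_R0 (fun n => sum_f_R0 (fun k => f k (n - k)%nat) n) N =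
  sum_f_R0 (fun k => sum_f_R0 (f k) (N - k)) N.
Proof.
  induction N as [|N IH]; [reflexivity |].
  rewrite tech5, IH, (tech5 (fun k => sum_f_R0 (f k) (S N - k))), tech5, Nat.sub_diag.
  replace (sum_f_R0 (fun k => sum_f_R0 (f k) (S N - k)) N)
    with (sum_f_R0 (fun k => sum_f_R0 (f k) (N - k) + f k (S N - k)%nat) N).
  - rewrite plus_sum. simpl. ring.
  - apply sum_eq. intros i Hi. replace (S N - i)%nat with (S (N - i)) by lia. reflexivity.
Qed.

Definition euler_coef (a : nat -> R) (n : nat) : R := sum_f_R0 (fun k => C n k * a (S k)) n.

Definition euler_psum (a : nat -> R) (u : R) (N : nat) : R :=
  sum_f_R0 (fun n => euler_coef a n * u ^ S n) N.

Lemma euler_psum_negbin a u N :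
  euler_psum a u N = sum_f_R0 (fun k => a (S k) * u ^ S k * negbin_psum k u (N - k)) N.
Proof.
  set (f := fun k j => a (S k) * u ^ S k * (C (k + j) k * u ^ j)).
  transitivity (sum_f_R0 (fun n => sum_f_R0 (fun k => f k (n - k)%nat) n) N).
  - apply sum_eq. intros n Hn. unfold euler_coef. rewrite Rmult_comm, scal_sum.
    apply sum_eq. intros k Hk. unfold f. replace (k + (n - k))%nat with n by lia.
    replace (S n) with (S k + (n - k))%nat by lia. rewrite pow_add. ring.
  - rewrite sum_f_R0_antidiag. apply sum_eq. intros k Hk. unfold f, negbin_psum.
    rewrite scal_sum. apply sum_eq. intros; ring.
Qed.

Lemma Pser_coef_bound a r l : Pser a r l -> exists M, forall k, Rabs (a k) * Rabs r ^ k <= M.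
Proof.
  intros H.
  assert (Hs : ex_series (fun n => a n * r ^ n)) by (exists l; apply is_series_Reals, H).
  apply ex_series_lim_0, is_lim_seq_Reals in Hs.
  destruct (maj_by_pos _ (exist _ 0 Hs)) as [M [_ HM]].
  exists M. intros k. rewrite RPow_abs, <- Rabs_mult. apply HM.
Qed.

Lemma euler_transform a u r lr l : 0 < u < 1 -> u / (1 - u) < r ->
  Pser a r lr -> Pser a (u / (1 - u)) l ->
  is_lim_seq (euler_psum a u) (l - a 0%nat).
Proof.
  intros Hu Hwr Hr Hl. set (w := u / (1 - u)) in *.
  assert (Hw0 : 0 < w) by (apply Rdiv_lt_0_compat; lra).
  destruct (Pser_coef_bound a r lr Hr) as [Mr HMr].
  set (q := w / r).
  assert (Hq : 0 <= q < 1).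
  { unfold q. split; [apply Rlt_le, Rdiv_lt_0_compat; lra |].
    apply Rmult_lt_reg_r with r; [lra |]. unfold Rdiv. rewrite Rmult_assoc, Rinv_l; lra. }
  assert (Hdom : forall k, Rabs (a k) * w ^ k <= Mr * q ^ k).
  { intros k. replace w with (Rabs r * q) by (unfold q; rewrite Rabs_pos_eq; [field |]; lra).
    rewrite Rpow_mult_distr, <- Rmult_assoc. apply Rmult_le_compat_r; [apply pow_le; lra | apply HMr]. }
  set (f := fun k N => a (S k) * (w ^ S k - u ^ S k * negbin_psum k u (N - k))).
  apply (is_lim_seq_ext (fun N => sum_f_R0 (fun k => a (S k) * w ^ S k) N - sum_f_R0 (fun k => f k N) N)).
  { intros N. rewrite euler_psum_negbin, <- minus_sum. apply sum_eq. intros k Hk. unfold f. ring. }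
  replace (l - a 0%nat) with ((l - a 0%nat) - 0) by ring.
  apply is_lim_seq_minus'.
  - apply (is_lim_seq_ext (fun N => sum_f_R0 (fun n => a n * w ^ n) (S N) - a 0%nat)).
    { intros N. rewrite decomp_sum by lia. simpl pred. rewrite pow_O. ring. }
    apply is_lim_seq_minus'; [| apply is_lim_seq_const].
    apply (is_lim_seq_incr_1 (fun N => sum_f_R0 (fun n => a n * w ^ n) N) l).
    apply is_lim_seq_Reals, Hl.
  - apply (tannery f Mr q Hq); intros k; unfold f.
    + intros N. destruct (negbin_tail_bounds k u (N - k) ltac:(lra)) as [Hd0 Hd1]. fold w in Hd0, Hd1.
      rewrite Rabs_mult, (Rabs_pos_eq (_ - _)) by lra.
      apply Rle_trans with (Rabs (a (S k)) * w ^ S k); [apply Rmult_le_compat_l; [apply Rabs_pos | lra] |].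
      apply Rle_trans with (Mr * q ^ S k); [apply Hdom |].
      assert (0 <= Mr * q ^ k)
        by (apply Rmult_le_pos; [specialize (Hdom 0%nat); simpl in Hdom; pose proof (Rabs_pos (a 0%nat)) | apply pow_le]; lra).
      simpl. nra.
    + replace 0 with (a (S k) * 0) by ring.
      apply is_lim_seq_mult'; [apply is_lim_seq_const | apply negbin_tail_cv; lra].
Qed.

Lemma psum_Pser a x l : Pser a x l -> psum a x = l.
Proof.
  intros H. apply (uniqueness_sum (fun n => a n * x ^ n)); [| exact H].
  apply (epsilon_spec (inhabits 0) (fun l => Pser a x l)). exists l; exact H.
Qed.

Definition pser_psum (a : nat -> R) (x : R) (N : nat) : R := sum_f_R0 (fun n => a n * x ^ n) N.

Lemma coefD_euler_coef a c m :
  coefD a c m = a (S (S (S m))) - euler_coef a (S (S m)) + (1 - c) * a (S (S m)) + c * euler_coef a (S m).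
Proof.
  unfold coefD, euler_coef.
  rewrite (tech5 _ (S m)), (tech5 _ m), (tech5 (fun k => C (S m) k * a (S k)) m), !C_n_n. ring.
Qed.

(* [coefD a c m] is the coefficient of [u^(m+2)] in [(z - c + 1) g(u) - (z - c) g(u/(1-u))]
   after Euler's transform, where [z = 1 / u]. *)
Lemma coefD_psum a c z N : z <> 0 ->
  sum_f_R0 (fun m => coefD a c m / z ^ S (S m)) N =
  z * (pser_psum a (/ z) (S (S (S N))) - a 0%nat) - z * euler_psum a (/ z) (S (S N))
  + (1 - c) * pser_psum a (/ z) (S (S N)) + c * (a 0%nat + euler_psum a (/ z) (S N)) - a 0%nat.
Proof.
  intros Hz.
  replace (sum_f_R0 (fun m => coefD a c m / z ^ S (S m)) N)
    with (sum_f_R0 (fun m => coefD a c m * (/ z) ^ S (S m)) N)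
    by (apply sum_eq; intros; rewrite pow_inv; reflexivity).
  induction N as [|N IH].
  - unfold pser_psum, euler_psum, euler_coef. simpl. rewrite coefD_euler_coef. unfold euler_coef. simpl.
    rewrite !C_n_0, !C_n_n. field. exact Hz.
  - rewrite tech5, IH. unfold pser_psum, euler_psum.
    rewrite !(tech5 _ (S (S (S N)))), !(tech5 _ (S (S N))), !(tech5 _ (S N)), coefD_euler_coef.
    simpl pow. field. exact Hz.
Qed.

Lemma Ffun_series a rho c y : 0 < rho ->
  (forall x, Rabs x < rho -> exists l, Pser a x l) ->
  y + c > 1 + Rmax 1 (/ rho) ->
  infinite_sum (fun m => coefD a c m / (y + c) ^ S (S m)) (Ffun a c y - a 0%nat).
Proof.
  intros Hrho Hconv Hy.
  assert (Hm1 := Rmax_l 1 (/ rho)). assert (Hm2 := Rmax_r 1 (/ rho)).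
  set (z := y + c) in *. set (u := / z). set (w := / (z - 1)).
  assert (Hu : 0 < u < 1).
  { unfold u. split; [apply Rinv_0_lt_compat; lra |].
    rewrite <- Rinv_1. apply Rinv_lt_contravar; lra. }
  assert (Huw : u / (1 - u) = w) by (unfold u, w; field; lra).
  assert (Hirho : 0 < / rho) by (apply Rinv_0_lt_compat; lra).
  assert (Hw : 0 < w < rho).
  { unfold w. split; [apply Rinv_0_lt_compat; lra |].
    rewrite <- (Rinv_inv rho). apply Rinv_lt_contravar; [apply Rmult_lt_0_compat |]; lra. }
  assert (Hlt : u < w) by (unfold u, w; apply Rinv_lt_contravar; [apply Rmult_lt_0_compat |]; lra).
  destruct (Hconv u ltac:(rewrite Rabs_pos_eq; lra)) as [gu Hgu].
  destruct (Hconv w ltac:(rewrite Rabs_pos_eq; lra)) as [gw Hgw].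
  destruct (Hconv ((w + rho) / 2) ltac:(rewrite Rabs_pos_eq; lra)) as [gr Hgr].
  assert (Heuler := euler_transform a u ((w + rho) / 2) gr gw Hu ltac:(rewrite Huw; lra) Hgr ltac:(rewrite Huw; exact Hgw)).
  assert (HF : Ffun a c y - a 0%nat =
    z * (gu - a 0%nat) - z * (gw - a 0%nat) + (1 - c) * gu + c * (a 0%nat + (gw - a 0%nat)) - a 0%nat).
  { unfold Ffun, Gfun, gfun. fold z. replace (y + c - 1) with (z - 1) by (unfold z; ring). fold u w.
    rewrite (psum_Pser _ _ _ Hgu), (psum_Pser _ _ _ Hgw). unfold z; ring. }
  rewrite HF. apply is_lim_seq_Reals. apply is_lim_seq_Reals in Hgu.
  apply (is_lim_seq_ext _ _ _ (fun N => eq_sym (coefD_psum a c z N ltac:(lra)))).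
  fold u.
  apply is_lim_seq_minus'; [| apply is_lim_seq_const].
  apply is_lim_seq_plus'; [apply is_lim_seq_plus'; [apply is_lim_seq_minus' |] |];
    apply is_lim_seq_mult'; try apply is_lim_seq_const.
  - apply is_lim_seq_minus'; [apply (is_lim_seq_shift _ _ 3), Hgu | apply is_lim_seq_const].
  - apply (is_lim_seq_shift _ _ 2), Heuler.
  - apply (is_lim_seq_shift _ _ 2), Hgu.
  - apply is_lim_seq_plus'; [apply is_lim_seq_const | apply (is_lim_seq_shift _ _ 1), Heuler].
Qed.

Lemma sum_C_le_pow2 n m : (m <= n)%nat -> sum_f_R0 (C n) m <= 2 ^ n.
Proof.
  intros H. replace (2 ^ n) with (sum_f_R0 (C n) n).
  - replace n with (m + (n - m))%nat at 3 by lia.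
    induction (n - m)%nat as [|d IH]; [rewrite Nat.add_0_r; lra |].
    rewrite Nat.add_succ_r, tech5. pose proof (C_ge0 n (S (m + d))). lra.
  - replace 2 with (1 + 1) by ring. rewrite binomial. apply sum_eq. intros. rewrite !pow1. ring.
Qed.

Lemma C_le_pow2 n j : (j <= n)%nat -> C n j <= 2 ^ n.
Proof.
  intros H. eapply Rle_trans; [| apply (sum_C_le_pow2 n j H)].
  destruct j as [|j]; [simpl; lra |]. rewrite tech5.
  pose proof (cond_pos_sum (C n) j (C_ge0 n)). lra.
Qed.

Lemma sum_C_mul_abs_le (a : nat -> R) n m B : (m <= n)%nat ->
  (forall j, (j <= m)%nat -> Rabs (a j) <= B) ->
  Rabs (sum_f_R0 (fun j => C n j * a j) m) <= B * 2 ^ n.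
Proof.
  intros Hmn HB. eapply Rle_trans; [apply sum_f_R0_triangle |].
  assert (0 <= B) by (specialize (HB 0%nat ltac:(lia)); pose proof (Rabs_pos (a 0%nat)); lra).
  apply Rle_trans with (sum_f_R0 (fun j => C n j * B) m).
  - apply sum_Rle. intros j Hj. rewrite Rabs_mult, (Rabs_pos_eq (C n j)) by apply C_ge0.
    apply Rmult_le_compat_l; [apply C_ge0 | auto].
  - rewrite <- scal_sum. apply Rmult_le_compat_l; [lra | apply sum_C_le_pow2; lia].
Qed.

Lemma coefD_le_geom a c M R1 m : 1 <= R1 ->
  (forall k, Rabs (a k) <= M * R1 ^ k) ->
  Rabs (coefD a c m) <= (2 * M * R1 ^ 2 * (Rabs c + 5)) * (2 * R1) ^ m.
Proof.
  intros HR Ha.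
  set (B := M * R1 ^ S (S m)).
  assert (HB : forall j, (j <= S m)%nat -> Rabs (a (S j)) <= B).
  { intros j Hj. eapply Rle_trans; [apply Ha |]. unfold B.
    apply Rmult_le_compat_l; [| apply Rle_pow; [lra | lia]].
    specialize (Ha 0%nat). simpl in Ha. pose proof (Rabs_pos (a 0%nat)). lra. }
  assert (H0B : 0 <= B) by (specialize (HB 0%nat ltac:(lia)); pose proof (Rabs_pos (a 1%nat)); lra).
  assert (H1 := sum_C_mul_abs_le (fun j => a (S j)) (S m) m B ltac:(lia) (fun j Hj => HB j ltac:(lia))).
  assert (H2 := sum_C_mul_abs_le (fun j => a (S j)) (S (S m)) m B ltac:(lia) (fun j Hj => HB j ltac:(lia))).
  assert (H3 := HB (S m) ltac:(lia)).
  assert (HC := C_le_pow2 (S (S m)) (S m) ltac:(lia)).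
  assert (HC0 := C_ge0 (S (S m)) (S m)).
  assert (Hp : 1 <= 2 ^ S m) by (apply pow_R1_Rle; lra).
  unfold coefD. cbv beta in H1, H2.
  set (S1 := sum_f_R0 (fun j => C (S m) j * a (S j)) m) in *.
  set (S2 := sum_f_R0 (fun j => C (S (S m)) j * a (S j)) m) in *.
  set (Cm := C (S (S m)) (S m)) in *.
  replace (2 ^ S (S m)) with (2 * 2 ^ S m) in * by reflexivity.
  assert (T3 : Rabs ((Cm - 1) * a (S (S m))) <= (2 * 2 ^ S m + 1) * B).
  { rewrite Rabs_mult. apply Rmult_le_compat; try apply Rabs_pos; auto. apply Rabs_le; split; lra. }
  assert (T1 : Rabs (c * S1) <= Rabs c * (B * 2 ^ S m))
    by (rewrite Rabs_mult; apply Rmult_le_compat_l; [apply Rabs_pos | exact H1]).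
  apply Rle_trans with (Rabs c * (B * 2 ^ S m) + B * (2 * 2 ^ S m) + (2 * 2 ^ S m + 1) * B).
  - eapply Rle_trans; [apply Rabs_triang |]. rewrite Rabs_Ropp.
    pose proof (Rabs_triang S2 ((Cm - 1) * a (S (S m)))). lra.
  - replace ((2 * M * R1 ^ 2 * (Rabs c + 5)) * (2 * R1) ^ m) with ((Rabs c + 5) * B * 2 ^ S m)
      by (unfold B; rewrite Rpow_mult_distr; simpl; ring).
    pose proof (Rabs_pos c). nra.
Qed.

Lemma Pser_coef_le_geom a r l : 0 < r -> Pser a r l ->
  exists M, forall k, Rabs (a k) <= M * Rmax 1 (/ r) ^ k.
Proof.
  intros Hr H. destruct (Pser_coef_bound a r l H) as [M HM].
  rewrite Rabs_pos_eq in HM by lra.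
  exists M. intros k.
  replace (Rabs (a k)) with (Rabs (a k) * r ^ k * (/ r) ^ k)
    by (rewrite Rmult_assoc, <- Rpow_mult_distr, Rinv_r, pow1 by lra; ring).
  assert (0 < / r) by (apply Rinv_0_lt_compat, Hr).
  apply Rmult_le_compat; [| apply pow_le; lra | apply HM |].
  - apply Rmult_le_pos; [apply Rabs_pos | apply pow_le; lra].
  - apply pow_incr. split; [lra | apply Rmax_r].
Qed.

Lemma infinite_sum_abs_le_geom (b : nat -> R) K q l : 0 <= q <= 1 / 2 ->
  (forall m, Rabs (b m) <= K * q ^ m) -> infinite_sum b l -> Rabs l <= 2 * K.
Proof.
  intros Hq Hb Hl.
  assert (HK : 0 <= K) by (specialize (Hb 0%nat); simpl in Hb; pose proof (Rabs_pos (b 0%nat)); lra).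
  apply (Rle_cv_lim (Un := fun N => Rabs (sum_f_R0 b N)) (Vn := fun _ => 2 * K)).
  - intros N. eapply Rle_trans; [apply sum_f_R0_triangle |].
    apply Rle_trans with (K * sum_f_R0 (fun m => q ^ m) N).
    { rewrite scal_sum. apply sum_Rle. intros m _. rewrite Rmult_comm. apply Hb. }
    rewrite tech3, (Rmult_comm 2 K) by lra. apply Rmult_le_compat_l; [lra |].
    assert (0 <= q ^ S N) by (apply pow_le; lra).
    apply Rmult_le_reg_r with (1 - q); [lra |].
    unfold Rdiv. rewrite Rmult_assoc, Rinv_l by lra. nra.
  - apply cv_cvabs, Hl.
  - apply is_lim_seq_Reals, is_lim_seq_const.
Qed.

Lemma Ffun_cv_a0 a rho c : 0 < rho ->
  (forall x, Rabs x < rho -> exists l, Pser a x l) ->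
  forall eps, eps > 0 -> exists M, forall y, y > M -> Rabs (Ffun a c y - a 0%nat) < eps.
Proof.
  intros Hrho Hconv eps He.
  destruct (Hconv (rho / 2) ltac:(rewrite Rabs_pos_eq; lra)) as [gr Hgr].
  destruct (Pser_coef_le_geom a (rho / 2) gr ltac:(lra) Hgr) as [M Ha].
  set (R1 := Rmax 1 (/ (rho / 2))) in Ha.
  assert (HR1 : 1 <= R1) by apply Rmax_l.
  set (K := 2 * M * R1 ^ 2 * (Rabs c + 5)). set (Q := 2 * R1).
  assert (HK : 0 <= K).
  { specialize (Ha 0%nat). simpl in Ha. pose proof (Rabs_pos (a 0%nat)). pose proof (Rabs_pos c).
    unfold K. apply Rmult_le_pos; [apply Rmult_le_pos; [| apply pow_le] |]; lra. }
  exists (2 + Rmax 1 (/ rho) + 2 * Q + 2 * K / eps + Rabs c).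
  intros y Hy.
  assert (HKe : 0 <= 2 * K / eps) by (apply Rmult_le_pos; [lra | left; apply Rinv_0_lt_compat; lra]).
  assert (Hc := Rle_abs (- c)). rewrite Rabs_Ropp in Hc.
  assert (Hm := Rmax_l 1 (/ rho)).
  assert (HQ : 2 <= Q) by (unfold Q; lra).
  assert (Hser := Ffun_series a rho c y Hrho Hconv ltac:(lra)).
  set (z := y + c) in *.
  assert (Hz : 2 * Q + 2 * K / eps + 2 <= z) by (unfold z; lra).
  set (u := / z).
  assert (Hu : 0 < u) by (apply Rinv_0_lt_compat; lra).
  assert (Hzu : z * u = 1) by (unfold u; field; lra).
  assert (Hlim : Rabs (Ffun a c y - a 0%nat) <= 2 * (K * u ^ 2)).
  { apply (infinite_sum_abs_le_geom (fun m => coefD a c m / z ^ S (S m)) (K * u ^ 2) (Q * u));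
      [split; nra | | exact Hser].
    intros m. unfold Rdiv. rewrite Rabs_mult, <- pow_inv. fold u.
    rewrite (Rabs_pos_eq (u ^ _)) by (apply pow_le; lra).
    replace (K * u ^ 2 * (Q * u) ^ m) with (K * Q ^ m * u ^ S (S m)) by (rewrite Rpow_mult_distr; simpl; ring).
    apply Rmult_le_compat_r; [apply pow_le; lra | apply coefD_le_geom; auto]. }
  assert (Hu1 : u <= 1 / 2) by nra.
  assert (2 * K * u < eps) by (apply Rmult_lt_reg_l with z; [lra |]; assert (2 * K / eps * eps = 2 * K) by (field; lra); nra).
  assert (K * u * u <= K * u * 1) by (apply Rmult_le_compat_l; [apply Rmult_le_pos |]; lra).
  simpl in Hlim. lra.
Qed.

Lemma ln_le_sub_1 s : 0 < s -> ln s <= s - 1.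
Proof. intros Hs. pose proof (exp_ineq1_le (ln s)). rewrite exp_ln in H; lra. Qed.

Lemma ln_1_plus_inv_bounds x : 0 < x -> / (x + 1) <= ln (1 + / x) <= / x.
Proof.
  intros Hx. assert (0 < / x) by (apply Rinv_0_lt_compat; lra). split.
  - assert (Hp : 0 < x / (x + 1)) by (apply Rdiv_lt_0_compat; lra).
    assert (E : ln (x / (x + 1)) = - ln (1 + / x))
      by (rewrite <- ln_Rinv by lra; f_equal; field; lra).
    pose proof (ln_le_sub_1 _ Hp). assert (x / (x + 1) - 1 = - / (x + 1)) by (field; lra). lra.
  - pose proof (ln_le_sub_1 (1 + / x)). lra.
Qed.

(* [Rpower (1 + / x) x = exp (xln1p_inv x)] holds by definition of [Rpower]. *)
Definition xln1p_inv (x : R) : R := x * ln (1 + / x).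

Lemma xln1p_inv_bounds x : 0 < x -> x / (x + 1) <= xln1p_inv x <= 1.
Proof.
  intros Hx. pose proof (ln_1_plus_inv_bounds x Hx). unfold xln1p_inv. split.
  - unfold Rdiv. apply Rmult_le_compat_l; lra.
  - apply Rle_trans with (x * / x); [apply Rmult_le_compat_l; lra | right; field; lra].
Qed.

Lemma xln1p_inv_derive x : 0 < x -> derivable_pt_lim xln1p_inv x (ln (1 + / x) - / (x + 1)).
Proof.
  intros Hx. apply is_derive_Reals. unfold xln1p_inv.
  assert (0 < / x) by (apply Rinv_0_lt_compat; lra).
  auto_derive; [repeat split; lra | field; split; lra].
Qed.

Lemma xln1p_inv_step x : 1 < x -> 0 <= xln1p_inv x - xln1p_inv (x - 1) <= / ((x - 1) * x).
Proof.
  intros Hx.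
  destruct (MVT_cor2 xln1p_inv (fun t => ln (1 + / t) - / (t + 1)) (x - 1) x) as [t [Ht Htr]];
    [lra | intros t Ht; apply xln1p_inv_derive; lra |].
  rewrite Ht. replace (x - (x - 1)) with 1 by ring. rewrite Rmult_1_r.
  pose proof (ln_1_plus_inv_bounds t ltac:(lra)).
  assert (/ t - / (t + 1) <= / ((x - 1) * x)).
  { replace (/ t - / (t + 1)) with (/ (t * (t + 1))) by (field; lra).
    apply Rinv_le_contravar; [apply Rmult_lt_0_compat | apply Rmult_le_compat]; lra. }
  lra.
Qed.

Lemma exp_le_compat a b : a <= b -> exp a <= exp b.
Proof. intros [H | ->]; [left; apply exp_increasing, H | right; reflexivity]. Qed.

Lemma exp_sub_bounds a b : b <= a -> 0 <= exp a - exp b <= exp a * (a - b).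
Proof.
  intros H. split.
  - pose proof (exp_le_compat b a H). lra.
  - replace (exp b) with (exp a * exp (b - a)) by (rewrite <- exp_plus; f_equal; ring).
    pose proof (exp_ineq1_le (b - a)). pose proof (exp_pos a). nra.
Qed.

Lemma Rpower_1_plus_inv_bounds x : 0 < x ->
  exp 1 * (1 - / (x + 1)) <= Rpower (1 + / x) x <= exp 1.
Proof.
  intros Hx. unfold Rpower. change (x * ln (1 + / x)) with (xln1p_inv x).
  destruct (xln1p_inv_bounds x Hx) as [Hlo Hhi]. split.
  - replace (exp 1 * (1 - / (x + 1))) with (exp 1 * (1 + - / (x + 1))) by ring.
    pose proof (exp_ineq1_le (- / (x + 1))). pose proof (exp_pos 1).
    apply Rle_trans with (exp 1 * exp (- / (x + 1))); [apply Rmult_le_compat_l; lra |].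
    rewrite <- exp_plus. apply exp_le_compat.
    replace (1 + - / (x + 1)) with (x / (x + 1)) by (field; lra). exact Hlo.
  - apply exp_le_compat, Hhi.
Qed.

Lemma Rpower_1_plus_inv_step x : 1 < x ->
  0 <= Rpower (1 + / x) x - Rpower (1 + / (x - 1)) (x - 1) <= exp 1 / ((x - 1) * x).
Proof.
  intros Hx. pose proof (Rpower_1_plus_inv_bounds x ltac:(lra)) as [_ Hhi].
  unfold Rpower in *. change (x * ln (1 + / x)) with (xln1p_inv x) in *.
  change ((x - 1) * ln (1 + / (x - 1))) with (xln1p_inv (x - 1)).
  destruct (xln1p_inv_step x Hx) as [Hd0 Hd1].
  destruct (exp_sub_bounds (xln1p_inv x) (xln1p_inv (x - 1)) ltac:(lra)) as [He0 He1].
  split; [exact He0 |]. eapply Rle_trans; [exact He1 |]. unfold Rdiv.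
  apply Rmult_le_compat; [apply Rlt_le, exp_pos | lra | exact Hhi | exact Hd1].
Qed.

Lemma Un_cv_of_le_div_INR (s : nat -> R) l K N0 :
  (forall n, (N0 <= n)%nat -> Rabs (s n - l) <= K / INR n) -> Un_cv s l.
Proof.
  intros H. apply is_lim_seq_Reals.
  assert (HK : is_lim_seq (fun n => K / INR n) 0).
  { replace 0 with (K * 0) by ring. apply is_lim_seq_mult'; [apply is_lim_seq_const |].
    apply (is_lim_seq_inv _ p_infty); [apply is_lim_seq_INR | discriminate]. }
  apply (is_lim_seq_le_le_loc (fun n => l - K / INR n) _ (fun n => l + K / INR n)).
  - exists N0. intros n Hn. specialize (H n Hn). apply Rabs_le_between in H. lra.
  - replace (Finite l) with (Finite (l - 0)) by (f_equal; ring). apply is_lim_seq_minus'; [apply is_lim_seq_const | exact HK].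
  - replace (Finite l) with (Finite (l + 0)) by (f_equal; ring). apply is_lim_seq_plus'; [apply is_lim_seq_const | exact HK].
Qed.

Lemma compound_interest_shift_cv c :
  Un_cv (fun n : nat =>
    (INR n + 1) * Rpower (1 + / (INR n + c)) (INR n + c)
    - INR n * Rpower (1 + / (INR n + c - 1)) (INR n + c - 1))
  (exp 1).
Proof.
  destruct (INR_unbounded (2 * Rabs c + 4)) as [N0 HN0].
  apply (Un_cv_of_le_div_INR _ _ 18 N0). intros n Hn.
  assert (Hn0 : 2 * Rabs c + 4 < INR n) by (apply Rlt_le_trans with (INR N0); [exact HN0 | apply le_INR, Hn]).
  pose proof (Rle_abs c). pose proof (Rle_abs (- c)). rewrite Rabs_Ropp in *.
  set (m := INR n) in *. set (x := m + c). replace (m + c - 1) with (x - 1) by (unfold x; ring).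
  assert (Hx : m / 2 + 1 <= x - 1) by (unfold x; lra).
  pose proof (Rpower_1_plus_inv_bounds x ltac:(lra)) as [Hlo Hhi].
  pose proof (Rpower_1_plus_inv_step x ltac:(lra)) as [Hd0 Hd1].
  set (A := Rpower (1 + / x) x) in *. set (B := Rpower (1 + / (x - 1)) (x - 1)) in *.
  replace ((m + 1) * A - m * B - exp 1) with ((A - exp 1) + m * (A - B)) by ring.
  assert (He3 := exp_le_3). assert (He0 := exp_pos 1).
  assert (T1 : exp 1 * / (x + 1) <= 6 / m).
  { replace (6 / m) with (3 * / (m / 2)) by (field; lra).
    apply Rmult_le_compat; [lra | left; apply Rinv_0_lt_compat; lra | lra |].
    apply Rinv_le_contravar; lra. }
  assert (T2 : m * (A - B) <= 12 / m).
  { apply Rle_trans with (m * (3 / ((m / 2) * (m / 2)))); [| right; field; lra].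
    apply Rmult_le_compat_l; [lra |]. eapply Rle_trans; [exact Hd1 |]. unfold Rdiv.
    apply Rmult_le_compat; [lra | left; apply Rinv_0_lt_compat, Rmult_lt_0_compat; lra | lra |].
    apply Rinv_le_contravar; [apply Rmult_lt_0_compat | apply Rmult_le_compat]; lra. }
  assert (0 <= m * (A - B)) by (apply Rmult_le_pos; lra).
  assert (6 / m + 12 / m = 18 / m) by (field; lra).
  apply Rabs_le. lra.
Qed.

Theorem mainTheorem5 :
  (forall (a : nat -> R) (rho c : R),
    0 < rho ->
    (forall x, Rabs x < rho -> exists l, Pser a x l) ->
    (forall y, y + c > 1 + Rmax 1 (/ rho) ->
       infinite_sum (fun m => coefD a c m / (y + c) ^ (S (S m)))
                    (Ffun a c y - a 0%nat))
    /\
    (forall eps, eps > 0 -> exists M, forall y, y > M ->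
       Rabs (Ffun a c y - a 0%nat) < eps))
  /\
  (forall c : R,
    Un_cv (fun n : nat =>
      (INR n + 1) * Rpower (1 + / (INR n + c)) (INR n + c)
      - INR n * Rpower (1 + / (INR n + c - 1)) (INR n + c - 1))
    (exp 1)).
Proof.
  split; [| exact compound_interest_shift_cv].
  intros a rho c Hrho Hconv. split.
  - intros y Hy. exact (Ffun_series a rho c y Hrho Hconv Hy).
  - exact (Ffun_cv_a0 a rho c Hrho Hconv).
Qed.
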